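(* For $a,s\in\mathbb C$, $(a,s/2)\in\overline{\mathbb B}_2$ if and only if there exists $p\in\mathbb T$ such that $(a,s,p)\in\overline{\mathbb P}$.
   Context: The pentablock is $\mathbb P=\{(a_{21},\operatorname{tr}A_0,\det A_0): A_0=[a_{ij}]\in M_2(\mathbb C),\ \|A_0\|<1\}\subset\mathbb C^3$ with closure $\overline{\mathbb P}$. $\overline{\mathbb B}_2$ is the closed Euclidean unit ball in $\mathbb C^2$ and $\mathbb T$ the unit circle. *)

From HB Require Import structures.
From mathcomp Require Import all_boot all_order all_algebra.
From mathcomp Require Import complex.
Set Implicit Arguments. Unset Strict Implicit. Unset Printing Implicit Defensive.
Import Order.TTheory GRing.Theory Num.Theory.
Local Open Scope ring_scope.

(* The
   order on [R[i]] is the canonical partial order of a numClosedFieldType: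
   [0 < e] forces [e] real and positive; [`|z|] is the modulus (a real
   nonnegative element of R[i]). *)

Definition vnorm2 (R : rcfType) (x : 'cV[R[i]]_2) : R[i] :=
  `|x 0 0| ^+ 2 + `|x 1 0| ^+ 2.

(* Operator norm (w.r.t. the Euclidean norm on C^2) strictly less than 1:
   sup_{|x|=1} |A x| < 1, i.e. there is c < 1 with |A x| <= c |x| for all x. *)
Definition opnorm_lt1 (R : rcfType) (A : 'M[R[i]]_2) : Prop :=
  exists c : R[i], 0 <= c /\ c < 1 /\
    forall x : 'cV[R[i]]_2, vnorm2 (A *m x) <= c ^+ 2 * vnorm2 x.

(* The pentablock P: points (a_21, tr A, det A) with ||A|| < 1.
   Index 1 0 is row 2, column 1 (0-based ordinals). *)
Definition pentablock (R : rcfType) (a s p : R[i]) : Prop :=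
  exists A : 'M[R[i]]_2, opnorm_lt1 A /\
    A 1 0 = a /\ \tr A = s /\ \det A = p.

(* Topological closure of P in C^3 (product/max-norm metric). *)
Definition pentablock_closure (R : rcfType) (a s p : R[i]) : Prop :=
  forall eps : R[i], 0 < eps ->
    exists a' s' p' : R[i], pentablock a' s' p' /\
      `|a' - a| < eps /\ `|s' - s| < eps /\ `|p' - p| < eps.

Definition closed_ball2 (R : rcfType) (z w : R[i]) : Prop :=
  `|z| ^+ 2 + `|w| ^+ 2 <= 1.

Definition unit_circle (R : rcfType) (p : R[i]) : Prop := `|p| = 1.

From HB Require Import structures.
From mathcomp Require Import all_boot all_order all_algebra.
From mathcomp Require Import complex reals.
From mathcomp Require Import ring lra.
Set Implicit Arguments.
Unset Strict Implicit.
Unset Printing Implicit Defensive.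
Import Order.TTheory GRing.Theory Num.Theory.
Import Normc.
Local Open Scope complex_scope.
Local Open Scope ring_scope.

(* If |A x| <= c |x| with c < 1, then the first column and the second row of A
   have squared length at most c^2, while |tr A / 2|^2 <= (|a11|^2 + |a22|^2) / 2;
   hence |a21|^2 + |tr A / 2|^2 is at most the mean of these two squared lengths,
   below 1, and the bound passes to the closure. Conversely, if
   |a|^2 + |s/2|^2 <= 1, write s/2 = |s/2| u with |u| = 1 and set
   alpha = u (|s/2| + i sqrt(1 - |a|^2 - |s/2|^2)), omega = u^2: the matrix
   [[alpha, -conj(a) omega], [a, conj(alpha) omega]] is unitary with entry a,
   trace s and determinant omega, so its dilations r U (r < 1) lie in the
   pentablock and tend to (a, s, omega). *)

Section Modulus.
Variable R : rcfType.
Implicit Types (z w : R[i]) (x : R).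

Lemma normcE z : `|z| = (normc z)%:C. Proof. by []. Qed.

Lemma normc_ge0 z : 0 <= normc z.
Proof. by case: z => *; exact: sqrtr_ge0. Qed.

Lemma normc_real x : 0 <= x -> normc x%:C = x.
Proof. by move=> x0; apply: complexI; rewrite -normcE ger0_norm // lecR. Qed.

Lemma normcJ z : normc z^* = normc z.
Proof. by apply: complexI; rewrite -!normcE norm_conjC. Qed.

Lemma normc_half z : normc (z / 2) = normc z / 2.
Proof. by rewrite normcM normcV -[2]/(2%:R) normcMn normc1 -[(1 *+ 2)]/2%:R. Qed.

Lemma normc_le_dist z w : normc z <= normc w + normc (w - z).
Proof. by have := le_normcD w (z - w); rewrite addrC subrK -[z - w]opprB normcN. Qed.

Lemma conjC_real x : x%:C^* = x%:C. Proof. exact: conjc_real. Qed.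

Lemma closed_ball2E z w :
  closed_ball2 z w <-> normc z ^+ 2 + normc w ^+ 2 <= 1.
Proof. by rewrite /closed_ball2 !normcE -!rmorphXn -rmorphD -lecR. Qed.

Lemma ge0_complex_real z : 0 <= z -> z = (complex.Re z)%:C.
Proof. by move=> z_ge0; rewrite [LHS]complexE (ger0_Im z_ge0) mulr0 addr0. Qed.

Lemma mulcJ z : z * z^* = (normc z ^+ 2)%:C.
Proof. by rewrite -normCK normcE rmorphXn. Qed.

End Modulus.

Section TwoByTwo.
Variable R : rcfType.
Implicit Types (A : 'M[R[i]]_2) (v : 'cV[R[i]]_2).

Lemma mulmx2E A v i : (A *m v) i 0 = A i 0 * v 0 0 + A i 1 * v 1 0.
Proof.
rewrite !mxE !big_ord_recl big_ord0 addr0.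
by congr (_ + _); congr (_ * _); congr (_ _ _); apply/val_inj.
Qed.

Lemma mxtrace2E A : \tr A = A 0 0 + A 1 1.
Proof.
rewrite /mxtrace !big_ord_recl big_ord0 addr0.
by congr (_ + _); congr (A _ _); apply/val_inj.
Qed.

Lemma det2E A : \det A = A 0 0 * A 1 1 - A 0 1 * A 1 0.
Proof.
rewrite (expand_det_row _ 0) !big_ord_recl big_ord0 addr0 /cofactor !det_mx11.
rewrite !mxE /= /bump /= expr0 expr1 mul1r mulN1r mulrN.
by congr (A _ _ * A _ _ - A _ _ * A _ _); apply/val_inj.
Qed.

Lemma vnorm2E v : vnorm2 v = (normc (v 0 0) ^+ 2 + normc (v 1 0) ^+ 2)%:C.
Proof. by rewrite /vnorm2 !normcE rmorphD !rmorphXn. Qed.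

Lemma vnorm2Z (c : R[i]) v : vnorm2 (c *: v) = `|c| ^+ 2 * vnorm2 v.
Proof. by rewrite /vnorm2 !mxE !normrM !exprMn mulrDr. Qed.

End TwoByTwo.

Section Necessity.
Variable R : rcfType.
Implicit Types (a s p : R[i]) (A : 'M[R[i]]_2).

Lemma opnorm_lt1_real A : opnorm_lt1 A ->
  exists2 c : R, 0 <= c < 1 &
    forall v, vnorm2 (A *m v) <= (c ^+ 2)%:C * vnorm2 v.
Proof.
move=> [c [c_ge0 [c_lt1 hA]]].
have c_real := ge0_complex_real c_ge0.
exists (complex.Re c); last by rewrite rmorphXn /= -c_real.
by rewrite -lecR -ltcR -c_real c_ge0.
Qed.

Section Contraction.
Variables (A : 'M[R[i]]_2) (c : R).
Hypothesis hA : forall v, vnorm2 (A *m v) <= (c ^+ 2)%:C * vnorm2 v.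

Lemma contraction_col0 : normc (A 0 0) ^+ 2 + normc (A 1 0) ^+ 2 <= c ^+ 2.
Proof.
have := hA (\col_i (if i == 0 then 1 else 0)).
rewrite !vnorm2E !mulmx2E !mxE /= !mulr1 !mulr0 !addr0.
by rewrite expr1n expr0n !addr0 sqrtr1 sqrtr0 expr1n expr0n addr0 mulr1 lecR.
Qed.

Lemma contraction_row1 : normc (A 1 0) ^+ 2 + normc (A 1 1) ^+ 2 <= c ^+ 2.
Proof.
set N := _ + _.
have N_ge0 : 0 <= N by rewrite addr_ge0 ?exprn_ge0 ?normc_ge0.
(* On the conjugated second row, the second entry of [A x] is [N] itself. *)
have := hA (\col_i (A 1 i)^*).
rewrite !vnorm2E !mulmx2E !mxE /= !normcJ !mulcJ -rmorphD normc_real //.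
rewrite -rmorphM lecR -/N => hN.
have := exprn_ge0 2 (normc_ge0 (A 0 0 * (A 1 0)^* + A 0 1 * (A 1 1)^*)).
nra.
Qed.

End Contraction.

Lemma trace_half_bound (u v t : R) : 0 <= u -> 0 <= v -> 0 <= t -> t <= u + v ->
  (t / 2) ^+ 2 <= (u ^+ 2 + v ^+ 2) / 2.
Proof.
move=> u_ge0 v_ge0 t_ge0 t_le.
have : t ^+ 2 <= (u + v) ^+ 2 by rewrite ler_sqr ?nnegrE ?addr_ge0.
have := sqr_ge0 (u - v).
nra.
Qed.

Lemma pentablock_normc_lt1 a s p :
  pentablock a s p -> normc a ^+ 2 + normc (s / 2) ^+ 2 < 1.
Proof.
move=> [A [/opnorm_lt1_real [c /andP[c_ge0 c_lt1] hA] [<- [<- _]]]].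
have col := contraction_col0 hA; have row := contraction_row1 hA.
have := trace_half_bound (normc_ge0 (A 0 0)) (normc_ge0 (A 1 1))
  (normc_ge0 (\tr A)).
rewrite mxtrace2E le_normcD => /(_ isT).
rewrite normc_half; nra.
Qed.

End Necessity.

Section Closure.
Variable R : rcfType.
Implicit Types (a s p : R[i]).

Lemma sqr_le_sqr_add (u v d : R) : 0 <= u <= 1 -> 0 <= v -> v <= u + d ->
  0 <= d <= 1 -> v ^+ 2 <= u ^+ 2 + 3 * d.
Proof.
move=> /andP[u_ge0 u_le1] v_ge0 v_le /andP[d_ge0 d_le1].
have : v ^+ 2 <= (u + d) ^+ 2 by rewrite ler_sqr ?nnegrE ?addr_ge0.
nra.
Qed.

Lemma pentablock_closure_normc_le1 a s p :
  pentablock_closure a s p -> normc a ^+ 2 + normc (s / 2) ^+ 2 <= 1.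
Proof.
move=> hcl; apply/ler_addgt0Pr => e e_gt0.
set d := Num.min 1 (e / 6).
have d_gt0 : 0 < d by rewrite lt_min ltr01 divr_gt0.
have d_le1 : d <= 1 by rewrite ge_min lexx.
have d_le : d <= e / 6 by rewrite ge_min lexx orbT.
have := hcl d%:C; rewrite ltcR => /(_ d_gt0) [a' [s' [p' [hp [ha [hs _]]]]]].
rewrite normcE ltcR in ha; rewrite normcE ltcR in hs.
have hb := pentablock_normc_lt1 hp.
have a'_ge0 := normc_ge0 a'; have s'_ge0 := normc_ge0 (s' / 2).
have a'_bd : 0 <= normc a' <= 1 by rewrite a'_ge0; nra.
have s'_bd : 0 <= normc (s' / 2) <= 1 by rewrite s'_ge0; nra.
have d_bd : 0 <= d <= 1 by rewrite d_le1 ltW.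
have ha_le : normc a <= normc a' + d by have := normc_le_dist a a'; lra.
have hs_le : normc (s / 2) <= normc (s' / 2) + d.
  by have := normc_le_dist (s / 2) (s' / 2); rewrite -mulrBl (normc_half (s' - s)); lra.
have := sqr_le_sqr_add a'_bd (normc_ge0 a) ha_le d_bd.
have := sqr_le_sqr_add s'_bd (normc_ge0 (s / 2)) hs_le d_bd.
lra.
Qed.

End Closure.

Section Dilation.
Variable R : rcfType.
Implicit Types (a s p : R[i]).

Lemma normc_dilate_sub (r : R) z : 0 <= r <= 1 ->
  normc (r%:C * z - z) = (1 - r) * normc z.
Proof.
move=> /andP[r_ge0 r_le1].
have -> : r%:C * z - z = - ((1 - r)%:C * z) by rewrite rmorphB rmorph1; ring.
by rewrite normcN normcM normc_real ?subr_ge0.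
Qed.

Lemma pentablock_closure_of_dilations a s p :
  (forall r : R, 0 <= r < 1 -> pentablock (r%:C * a) (r%:C * s) (r%:C ^+ 2 * p)) ->
  pentablock_closure a s p.
Proof.
move=> hdil eps eps_gt0.
have eps_real := ge0_complex_real (ltW eps_gt0).
set e := complex.Re eps in eps_real.
move: eps_gt0; rewrite eps_real ltcR => e_gt0.
set M := normc a + normc s + 2 * normc p.
have M_ge0 : 0 <= M by rewrite !addr_ge0 ?mulr_ge0 ?normc_ge0.
set d := e / (e + M).
have eM_neq0 : e + M != 0 by rewrite gt_eqF ?ltr_wpDr.
have dE : d * (e + M) = e by rewrite mulfVK.
have d_gt0 : 0 < d by rewrite divr_gt0 ?ltr_wpDr.
have dM_lt : d * M < e by nra.
have d_le1 : d <= 1 by nra.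
have r_bd : 0 <= 1 - d <= 1 by apply/andP; split; lra.
exists ((1 - d)%:C * a), ((1 - d)%:C * s), ((1 - d)%:C ^+ 2 * p); split.
  by apply: hdil; apply/andP; split; lra.
rewrite !normcE !ltcR -rmorphXn.
have r2_bd : 0 <= (1 - d) ^+ 2 <= 1 by apply/andP; split; nra.
rewrite !normc_dilate_sub //.
have a_ge0 := normc_ge0 a; have s_ge0 := normc_ge0 s; have p_ge0 := normc_ge0 p.
rewrite /M in dM_lt.
by split; [|split]; nra.
Qed.

End Dilation.

Section Sufficiency.
Variable R : rcfType.
Implicit Types (a s al om z : R[i]).

Lemma polar_decomposition z : exists2 u : R[i], u * u^* = 1 & z = (normc z)%:C * u.
Proof.
have [-> | z_neq0] := eqVneq z 0.
  by exists 1; rewrite ?conjC1 ?mulr1 // normc0.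
have n_neq0 : normc z != 0 by apply: contra z_neq0 => /eqP /eq0_normc ->.
exists (z / (normc z)%:C); last by rewrite mulrC divfK // -normcE normr_eq0.
by rewrite mulcJ normcM normcV normc_real ?normc_ge0 // divff // expr1n.
Qed.

Lemma isometry_parameters a s : normc a ^+ 2 + normc (s / 2) ^+ 2 <= 1 ->
  exists al om, [/\ al * al^* + a * a^* = 1, om * om^* = 1 & al + al^* * om = s].
Proof.
move=> hb; set t := s / 2 in hb.
have sE : s = 2 * t by rewrite /t mulrC divfK ?pnatr_eq0.
have [u uJ tE] := polar_decomposition t.
set n := normc t in hb tE.
set k := Num.sqrt (1 - normc a ^+ 2 - n ^+ 2).
have k2 : k ^+ 2 = 1 - normc a ^+ 2 - n ^+ 2 by rewrite sqr_sqrtr ?subr_ge0 //; lra.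
have vJ : (n%:C + 'i * k%:C)^* = n%:C - 'i * k%:C.
  by rewrite rmorphD rmorphM /= conjCi !conjC_real mulNr.
exists (u * (n%:C + 'i * k%:C)), (u ^+ 2); split.
- rewrite rmorphM /= vJ mulcJ.
  transitivity ((u * u^*) * (n%:C ^+ 2 - 'i ^+ 2 * k%:C ^+ 2) + (normc a ^+ 2)%:C).
    by ring.
  rewrite uJ sqrCi mul1r mulN1r opprK -!rmorphXn k2 -!rmorphD.
  by rewrite [X in _ X = _](_ : _ = 1) ?rmorph1 //; ring.
- by rewrite rmorphXn -exprMn uJ expr1n.
- rewrite rmorphM /= vJ sE tE.
  transitivity (u * (n%:C + 'i * k%:C) + (u * u^*) * u * (n%:C - 'i * k%:C)).
    by ring.
  by rewrite uJ; ring.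
Qed.

Definition isomx al a om : 'M[R[i]]_2 :=
  \matrix_(i, j) if i == 0 then (if j == 0 then al else - a^* * om)
                 else (if j == 0 then a else al^* * om).

Section Isometry.
Variables al a om : R[i].
Hypotheses (alJ : al * al^* + a * a^* = 1) (omJ : om * om^* = 1).

Lemma isomx_isometry v : vnorm2 (isomx al a om *m v) = vnorm2 v.
Proof.
rewrite /vnorm2 !normCK !mulmx2E !mxE /= !(rmorphD, rmorphM, rmorphN) /= !conjCK.
transitivity ((al * al^* + a * a^*) * (v 0 0 * (v 0 0)^*) +
   (al * al^* + a * a^*) * (om * om^*) * (v 1 0 * (v 1 0)^*)); first by ring.
by rewrite alJ omJ !mul1r.
Qed.

Lemma mxtrace_isomx : \tr (isomx al a om) = al + al^* * om.
Proof. by rewrite mxtrace2E !mxE. Qed.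

Lemma det_isomx : \det (isomx al a om) = om.
Proof.
rewrite det2E !mxE /=.
by transitivity (om * (al * al^* + a * a^*)); [ring | rewrite alJ mulr1].
Qed.

End Isometry.

Lemma opnorm_lt1_scale_isometry (U : 'M[R[i]]_2) (r : R) :
  (forall v, vnorm2 (U *m v) = vnorm2 v) -> 0 <= r < 1 -> opnorm_lt1 (r%:C *: U).
Proof.
move=> hU /andP[r_ge0 r_lt1]; exists r%:C; rewrite lecR ltcR; do !split => //.
by move=> v; rewrite -scalemxAl vnorm2Z hU normcE normc_real.
Qed.

Lemma pentablock_dilations_of_ball a s : normc a ^+ 2 + normc (s / 2) ^+ 2 <= 1 ->
  exists2 om, unit_circle om &
    forall r : R, 0 <= r < 1 -> pentablock (r%:C * a) (r%:C * s) (r%:C ^+ 2 * om).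
Proof.
move=> /isometry_parameters [al [om [alJ omJ trE]]]; exists om.
  by apply/eqP; rewrite -sqrp_eq1 // normCK omJ.
move=> r hr; exists (r%:C *: isomx al a om); split.
  exact: opnorm_lt1_scale_isometry (isomx_isometry alJ omJ) hr.
by rewrite !mxE mxtraceZ mxtrace_isomx trE detZ det_isomx.
Qed.

End Sufficiency.

Theorem mainTheorem10 (R : realType) (a s : R[i]) :
  closed_ball2 a (s / 2) <->
  exists p : R[i], unit_circle p /\ pentablock_closure a s p.
Proof.
rewrite closed_ball2E; split.
  move=> /pentablock_dilations_of_ball [p p_unit hdil].
  by exists p; split; last exact: pentablock_closure_of_dilations.
by move=> [p [_ /pentablock_closure_normc_le1]].
Qed.
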